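(* Let $d\ge1$ and $K^\infty(t)=\frac{1}{2\pi}\,t\,(\pi-\arccos t)$ for $t\in[-1,1]$. For every spherical harmonic $Y$ on $\mathbb{S}^d$ of odd degree $k\ge3$, $$\int_{\mathbb{S}^d}K^\infty(\mathbf{u}^T\mathbf{v})\,Y(\mathbf{v})\,d\mathbf{v}=0\quad\text{for all }\mathbf{u}\in\mathbb{S}^d,$$ i.e. the eigenvalues of convolution with $K^\infty$ corresponding to odd harmonics of degree $k\ge3$ vanish.
   Context: $\mathbb{S}^d$ is the unit sphere in $\mathbb{R}^{d+1}$ with surface measure $d\mathbf{v}$. A spherical harmonic of degree $k$ is the restriction to $\mathbb{S}^d$ of a homogeneous harmonic polynomial of degree $k$ on $\mathbb{R}^{d+1}$. Note $K^\infty(\mathbf{x}^T\mathbf{y})$ is proportional to $\mathbb{E}_{\mathbf{w}}[\mathbb{1}\{\mathbf{w}^T\mathbf{x}>0\}\mathbb{1}\{\mathbf{w}^T\mathbf{y}>0\}]\,\mathbf{x}^T\mathbf{y}$ for $\mathbf{w}$ Gaussian (equivalently uniform on the sphere). *)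

From Stdlib Require Import Reals Lra ClassicalEpsilon.
Open Scope R_scope.

(* Vectors of R^{d+1}: functions nat -> R, coordinates 0..d are used. *)
Definition dot (d : nat) (u v : nat -> R) : R := sum_f_R0 (fun i => u i * v i) d.

Definition epsilon_inh {A : Type} (h : inhabited A) : A :=
  let (x, _) := constructive_indefinite_description (fun _ : A => True)
                  (match h with inhabits a => ex_intro _ a I end) in x.

(* Totalised Riemann integral (value 0 if not Riemann integrable). *)
Definition Rint (f : R -> R) (a b : R) : R :=
  match excluded_middle_informative (inhabited (Riemann_integrable f a b)) with
  | left h => RiemannInt (epsilon_inh h)
  | right _ => 0
  end.


Definition cons_vec (x0 : R) (w : nat -> R) : nat -> R :=
  fun i => match i with O => x0 | S j => w j end.

(* Integral w.r.t. the surface measure of S^d ⊂ R^{d+1}, via spherical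
   coordinates: x = (cos θ, sin θ · w), w ∈ S^{d-1}, dσ_d = sin^{d-1} θ dθ dσ_{d-1};
   S^0 = {±1} with counting measure. *)
Fixpoint sphere_int (d : nat) (f : (nat -> R) -> R) : R :=
  match d with
  | O => f (cons_vec 1 (fun _ => 0)) + f (cons_vec (-1) (fun _ => 0))
  | S d' => Rint (fun th => sin th ^ d' *
                  sphere_int d' (fun w => f (cons_vec (cos th) (fun i => sin th * w i))))
                 0 PI
  end.

(* Polynomials in the variables x_0..x_d: finite lists of monomials (coeff, exponents). *)
Definition mpoly := list (R * (nat -> nat)).

Fixpoint prod_upto (g : nat -> R) (n : nat) : R :=
  match n with O => g O | S m => prod_upto g m * g (S m) end.

Fixpoint deg_upto (a : nat -> nat) (n : nat) : nat :=
  match n with O => a O | S m => (deg_upto a m + a (S m))%nat end.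

Definition mono_eval (d : nat) (m : R * (nat -> nat)) (x : nat -> R) : R :=
  fst m * prod_upto (fun i => x i ^ (snd m i)) d.

Definition peval (d : nat) (p : mpoly) (x : nat -> R) : R :=
  List.fold_right (fun m acc => mono_eval d m x + acc) 0 p.

Definition homogeneous (d k : nat) (p : mpoly) : Prop :=
  List.Forall (fun m => deg_upto (snd m) d = k) p.

(* Formal second partial derivative in x_i. *)
Definition d2_mono (i : nat) (m : R * (nat -> nat)) : R * (nat -> nat) :=
  (fst m * INR (snd m i) * INR (snd m i - 1),
   fun j => if Nat.eqb j i then (snd m j - 2)%nat else snd m j).

Definition laplacian (d : nat) (p : mpoly) : mpoly :=
  List.flat_map (fun i => List.map (d2_mono i) p) (List.seq 0 (S d)).

Definition harmonic (d : nat) (p : mpoly) : Prop :=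
  forall x, peval d (laplacian d p) x = 0.

Definition Kinf (t : R) : R := / (2 * PI) * t * (PI - acos t).

From Stdlib Require Import Reals Lra Lia FunctionalExtensionality List Classical ClassicalEpsilon.
From Coquelicot Require Import Coquelicot.
Open Scope R_scope.

(* K^infty(t) = t/4 + E(t) where E(t) = t asin(t)/(2 PI) is even.
   - The even part: for Y odd (homogeneous of odd degree) the integrand
     v |-> E(u.v) Y(v) is odd, and the sphere integral is invariant under the
     antipodal map v |-> -v, so it vanishes.
   - The linear part: a harmonic homogeneous polynomial p of degree k >= 2 is
     orthogonal to every coordinate x_i.  This is proved on monomial moments
     M(b) = \int x^b: polar separation of variables reduces M(b) to products of
     Wallis integrals \int_0^PI cos^a sin^b, whose recursions give
       (|b| + d + 1) M(b + 2e_i) = (b_i + 1) M(b)   and   M(b) = 0 for b_i odd,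
     hence the moment form of  \int x_i Delta(x^a) = (|a| + d)(|a| - 1) \int x_i x^a.
     Summing over the monomials of p and using Delta p = 0 gives \int x_i p = 0.
   Since [sphere_int] is an iterated totalised Riemann integral, its linearity
   and antipodal invariance are proved, by induction on d, for the class of
   integrands that are bounded and uniformly continuous on the cube [-1,1]^(d+1). *)

Lemma cont_const (c : R) x : continuous (fun _ : R => c) x.
Proof. exact (continuous_const (U:=R_UniformSpace) (V:=R_UniformSpace) c x). Qed.

Lemma cont_id x : continuous (fun y : R => y) x.
Proof. exact (continuous_id (U:=R_UniformSpace) x). Qed.

Lemma cont_plus (f g : R -> R) x :
  continuous f x -> continuous g x -> continuous (fun y => f y + g y) x.
Proof. exact (continuous_plus (V:=R_NormedModule) f g x). Qed.

Lemma cont_opp (f : R -> R) x : continuous f x -> continuous (fun y => - f y) x.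
Proof. exact (continuous_opp (V:=R_NormedModule) f x). Qed.

Lemma cont_mult (f g : R -> R) x :
  continuous f x -> continuous g x -> continuous (fun y => f y * g y) x.
Proof. exact (continuous_mult (K:=R_AbsRing) f g x). Qed.

Lemma cont_pow (f : R -> R) n x : continuous f x -> continuous (fun y => f y ^ n) x.
Proof.
  intros hf; induction n as [|n IH]; simpl; [apply cont_const | now apply cont_mult].
Qed.

Lemma cont_of_pt (f : R -> R) x : continuity_pt f x -> continuous f x.
Proof. apply continuity_pt_filterlim. Qed.

Lemma PI_ge0 : 0 <= PI.
Proof. generalize PI_RGT_0; lra. Qed.

Lemma Rint_RInt f a b : ex_RInt f a b -> Rint f a b = RInt f a b.
Proof.
  intros hf. unfold Rint. destruct excluded_middle_informative as [h|h].
  - apply eq_sym, RInt_Reals.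
  - exfalso; exact (h (inhabits (ex_RInt_Reals_0 _ _ _ hf))).
Qed.

Lemma Rint_not_integrable f a b : ~ ex_RInt f a b -> Rint f a b = 0.
Proof.
  intros hf. unfold Rint. destruct excluded_middle_informative as [[pr]|h]; auto.
  exfalso; exact (hf (ex_RInt_Reals_1 _ _ _ pr)).
Qed.

Lemma RInt_extR (f g : R -> R) a b : (forall x, f x = g x) -> RInt f a b = RInt g a b.
Proof. intros H. apply (RInt_ext (V:=R_CompleteNormedModule)). intros; apply H. Qed.

Lemma RInt_scalR (f : R -> R) a b c : ex_RInt f a b -> RInt (fun x => c * f x) a b = c * RInt f a b.
Proof. exact (RInt_scal (V:=R_CompleteNormedModule) f a b c). Qed.

Lemma ex_RInt_scalR (f : R -> R) a b c : ex_RInt f a b -> ex_RInt (fun x => c * f x) a b.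
Proof. exact (ex_RInt_scal (V:=R_NormedModule) f a b c). Qed.

Lemma RInt_plusR (f g : R -> R) a b : ex_RInt f a b -> ex_RInt g a b ->
  RInt (fun x => f x + g x) a b = RInt f a b + RInt g a b.
Proof. exact (RInt_plus (V:=R_CompleteNormedModule) f g a b). Qed.

(* [Rint] is homogeneous for every integrand: a nonzero multiple of a
   non-integrable function is not integrable. *)
Lemma Rint_scal f a b c : Rint (fun x => c * f x) a b = c * Rint f a b.
Proof.
  destruct (Req_dec c 0) as [->|hc].
  - replace (fun x => 0 * f x) with (fun _ : R => 0)
      by (apply functional_extensionality; intros; ring).
    rewrite Rint_RInt by apply (ex_RInt_const (V:=R_NormedModule)).
    rewrite (RInt_const (V:=R_CompleteNormedModule)). cbn. unfold mult; cbn. ring.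
  - destruct (classic (ex_RInt f a b)) as [hf|hf].
    + rewrite !Rint_RInt by auto using ex_RInt_scalR. now apply RInt_scalR.
    + rewrite !Rint_not_integrable; [ring | exact hf |].
      intros hcf. apply hf.
      apply (ex_RInt_ext (V:=R_NormedModule) (fun x => / c * (c * f x))).
      { intros x _. rewrite <- Rmult_assoc, Rinv_l by exact hc. apply Rmult_1_l. }
      now apply ex_RInt_scalR.
Qed.

Lemma ex_RInt_cont (f : R -> R) : (forall x, continuous f x) -> ex_RInt f 0 PI.
Proof.
  intros hf. apply ex_RInt_Reals_1, continuity_implies_RiemannInt.
  - apply PI_ge0.
  - intros x _. apply continuity_pt_filterlim, hf.
Qed.

Lemma Rint_cont (f : R -> R) : (forall x, continuous f x) -> Rint f 0 PI = RInt f 0 PI.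
Proof. intros; now apply Rint_RInt, ex_RInt_cont. Qed.

Lemma RInt_derive_closed (f df : R -> R) :
  (forall x, is_derive f x (df x)) -> (forall x, continuous df x) ->
  f PI = f 0 -> RInt df 0 PI = 0.
Proof.
  intros hd hc he.
  rewrite (is_RInt_unique _ _ _ _
            (is_RInt_derive (V:=R_CompleteNormedModule) f df 0 PI (fun x _ => hd x) (fun x _ => hc x))).
  rewrite he. unfold minus, plus, opp; simpl. ring.
Qed.

Lemma RInt_reflect (f : R -> R) : (forall x, continuous f x) ->
  RInt (fun th => f (PI - th)) 0 PI = RInt f 0 PI.
Proof.
  intros hc.
  assert (Hc : ex_RInt f (-1 * 0 + PI) (-1 * PI + PI)).
  { replace (-1 * 0 + PI) with PI by ring. replace (-1 * PI + PI) with 0 by ring.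
    apply ex_RInt_swap, ex_RInt_cont, hc. }
  pose proof (RInt_comp_lin (V:=R_CompleteNormedModule) f (-1) PI 0 PI Hc) as H.
  replace (-1 * 0 + PI) with PI in H by ring. replace (-1 * PI + PI) with 0 in H by ring.
  rewrite <- (opp_RInt_swap (V:=R_CompleteNormedModule) f 0 PI) in H by exact (ex_RInt_cont f hc).
  rewrite (RInt_extR _ (fun y => -1 * f (PI - y))) in H
    by (intros y; unfold scal; simpl; unfold mult; simpl; do 2 f_equal; ring).
  rewrite RInt_scalR in H.
  - unfold opp in H; simpl in H. lra.
  - apply ex_RInt_cont. intros x.
    apply (continuous_comp (fun th => PI - th) f); [|apply hc].
    apply (cont_plus (fun _ => PI) (fun th => - th)); [apply cont_const|apply cont_opp, cont_id].
Qed.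

(* Wallis-type integrals  W(a, b) = \int_0^PI cos^a t sin^b t dt; every
   polar slice of a monomial moment on the sphere is one of them. *)
Definition wallis (a b : nat) : R := Rint (fun t => cos t ^ a * sin t ^ b) 0 PI.

Lemma cos_sin_pow_cont a b x : continuous (fun t => cos t ^ a * sin t ^ b) x.
Proof. apply cont_mult; apply cont_pow; [apply continuous_cos | apply continuous_sin]. Qed.

Lemma ex_RInt_cos_sin a b : ex_RInt (fun t => cos t ^ a * sin t ^ b) 0 PI.
Proof. apply ex_RInt_cont, cos_sin_pow_cont. Qed.

Lemma wallis_RInt a b : wallis a b = RInt (fun t => cos t ^ a * sin t ^ b) 0 PI.
Proof. apply Rint_cont, cos_sin_pow_cont. Qed.

(* Integration by parts, from (cos^(a+1) sin^(b+1))' vanishing at 0 and PI. *)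
Lemma wallis_parts a b : (INR a + 1) * wallis a (b + 2) = (INR b + 1) * wallis (a + 2) b.
Proof.
  rewrite !wallis_RInt.
  assert (H : RInt (fun t => - (INR a + 1) * (cos t ^ a * sin t ^ (b + 2))
                            + (INR b + 1) * (cos t ^ (a + 2) * sin t ^ b)) 0 PI = 0).
  { apply (RInt_derive_closed (fun t => cos t ^ S a * sin t ^ S b)).
    - intros x. auto_derive; auto. rewrite !pow_add. destruct a, b; simpl; ring.
    - intros x. apply cont_plus; apply cont_mult; auto using cont_const, cos_sin_pow_cont.
    - rewrite sin_PI, sin_0. simpl. ring. }
  rewrite RInt_plusR, !RInt_scalR in H; auto using ex_RInt_cos_sin, ex_RInt_scalR. lra.
Qed.

Lemma wallis_pythagoras a b : wallis a b = wallis (a + 2) b + wallis a (b + 2).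
Proof.
  rewrite !wallis_RInt, <- RInt_plusR by apply ex_RInt_cos_sin.
  apply RInt_extR. intros x. rewrite !pow_add.
  pose proof (sin2_cos2 x) as E. unfold Rsqr in E.
  transitivity (cos x ^ a * sin x ^ b * (sin x * sin x + cos x * cos x)); [rewrite E|]; simpl; ring.
Qed.

Lemma wallis_cos_step a b : wallis (a + 2) b * (INR a + INR b + 2) = (INR a + 1) * wallis a b.
Proof. rewrite (wallis_pythagoras a b). pose proof (wallis_parts a b). lra. Qed.

Lemma wallis_sin_step a b : wallis a (b + 2) * (INR a + INR b + 2) = (INR b + 1) * wallis a b.
Proof. rewrite (wallis_pythagoras a b). pose proof (wallis_parts a b). lra. Qed.

(* An odd power of cos integrates to 0 against sin^b (cos is odd about PI/2). *)
Lemma wallis_odd_cos n b : wallis (S (2 * n)) b = 0.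
Proof.
  induction n as [|n IH].
  - assert (H : RInt (fun t => (INR b + 1) * (cos t ^ 1 * sin t ^ b)) 0 PI = 0).
    { apply (RInt_derive_closed (fun t => sin t ^ S b)).
      - intros x. auto_derive; auto. destruct b; simpl; ring.
      - intros x. apply cont_mult; [apply cont_const | apply cos_sin_pow_cont].
      - rewrite sin_PI, sin_0. reflexivity. }
    rewrite RInt_scalR, <- wallis_RInt in H by apply ex_RInt_cos_sin.
    pose proof (pos_INR b). simpl. nra.
  - pose proof (wallis_cos_step (S (2 * n)) b) as H.
    replace (S (2 * n) + 2)%nat with (S (2 * S n)) in H by lia.
    rewrite IH in H. pose proof (pos_INR (S (2 * n))). pose proof (pos_INR b). nra.
Qed.

(* Homogeneity of [sphere_int] holds for arbitrary integrands, since it holds for [Rint]. *)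
Lemma sphere_int_scal d : forall f c, sphere_int d (fun v => c * f v) = c * sphere_int d f.
Proof.
  induction d as [|d IH]; intros f c; simpl; [ring|].
  rewrite <- Rint_scal. f_equal. apply functional_extensionality. intros th.
  rewrite IH. ring.
Qed.

Lemma sphere_int_zero d : sphere_int d (fun _ => 0) = 0.
Proof.
  replace (fun _ : nat -> R => 0) with (fun _ : nat -> R => 0 * 0)
    by (apply functional_extensionality; intros; ring).
  rewrite sphere_int_scal. ring.
Qed.

Definition lsum {A : Type} (f : A -> R) (l : list A) : R := fold_right (fun a acc => f a + acc) 0 l.

Lemma lsum_app {A} (f : A -> R) l1 l2 : lsum f (l1 ++ l2) = lsum f l1 + lsum f l2.
Proof. induction l1 as [|a l1 IH]; simpl; [ring|]. unfold lsum in *. simpl. rewrite IH. ring. Qed.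

Lemma lsum_scal {A} (f : A -> R) c l : lsum (fun a => c * f a) l = c * lsum f l.
Proof. induction l as [|a l IH]; simpl; [ring|]. unfold lsum in *; simpl. rewrite IH. ring. Qed.

Lemma lsum_plus {A} (f g : A -> R) l : lsum (fun a => f a + g a) l = lsum f l + lsum g l.
Proof. induction l as [|a l IH]; simpl; [ring|]. unfold lsum in *; simpl. rewrite IH. ring. Qed.

Lemma lsum_ext {A} (f g : A -> R) l : (forall a, In a l -> f a = g a) -> lsum f l = lsum g l.
Proof.
  induction l as [|a l IH]; intros H; simpl; [reflexivity|]. unfold lsum in *; simpl.
  rewrite H, IH; auto. intros; apply H; right; auto. left; auto.
Qed.

Lemma lsum_cons {A} (f : A -> R) a l : lsum f (a :: l) = f a + lsum f l.
Proof. reflexivity. Qed.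

Lemma lsum_zero {A} (l : list A) : lsum (fun _ => 0) l = 0.
Proof. induction l as [|a l IH]; [reflexivity|]. rewrite lsum_cons, IH. ring. Qed.

Lemma lsum_swap {A B} (f : A -> B -> R) l1 l2 :
  lsum (fun a => lsum (fun b => f a b) l2) l1 = lsum (fun b => lsum (fun a => f a b) l1) l2.
Proof.
  induction l1 as [|a l1 IH].
  - symmetry. apply lsum_zero.
  - rewrite lsum_cons, IH, <- lsum_plus. reflexivity.
Qed.

Lemma lsum_flat_map {A B} (f : B -> R) (g : A -> list B) l :
  lsum f (flat_map g l) = lsum (fun a => lsum f (g a)) l.
Proof. induction l as [|a l IH]; simpl; [reflexivity|]. rewrite lsum_app, IH. reflexivity. Qed.

Lemma lsum_map {A B} (f : B -> R) (g : A -> B) l : lsum f (map g l) = lsum (fun a => f (g a)) l.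
Proof. induction l as [|a l IH]; simpl; [reflexivity|]. unfold lsum in *; simpl. now rewrite IH. Qed.

Lemma lsum_seq_last (f : nat -> R) d : lsum f (seq 0 (S (S d))) = lsum f (seq 0 (S d)) + f (S d).
Proof. rewrite seq_S, lsum_app, lsum_cons. simpl (0 + S d)%nat. change (lsum f nil) with 0. ring. Qed.

Lemma lsum_delta i d c : (i <= d)%nat ->
  lsum (fun j => if Nat.eqb j i then c else 0) (seq 0 (S d)) = c.
Proof.
  intros hi. induction d as [|d IH].
  - replace i with 0%nat by lia. unfold lsum. simpl. ring.
  - rewrite lsum_seq_last. destruct (Nat.eqb_spec (S d) i) as [<-|hne].
    + rewrite (lsum_ext _ (fun _ => 0)), lsum_zero; [ring|].
      intros j hj. apply in_seq in hj. destruct (Nat.eqb_spec j (S d)); [lia | reflexivity].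
    + rewrite IH by lia. ring.
Qed.

Lemma deg_lsum b d : INR (deg_upto b d) = lsum (fun j => INR (b j)) (seq 0 (S d)).
Proof.
  induction d as [|d IH]; [unfold lsum; simpl; ring|].
  rewrite lsum_seq_last, <- IH. simpl deg_upto. apply plus_INR.
Qed.

Definition monomial (d : nat) (b : nat -> nat) (v : nat -> R) : R := prod_upto (fun i => v i ^ b i) d.
Definition moment (d : nat) (b : nat -> nat) : R := sphere_int d (monomial d b).

Definition map_at (b : nat -> nat) (i : nat) (f : nat -> nat) : nat -> nat :=
  fun l => if Nat.eqb l i then f (b l) else b l.
Definition exp_tail (b : nat -> nat) : nat -> nat := fun j => b (S j).

Lemma map_at_same b i f : map_at b i f i = f (b i).
Proof. unfold map_at. now rewrite Nat.eqb_refl. Qed.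

Lemma map_at_other b i f l : l <> i -> map_at b i f l = b l.
Proof. intros h. unfold map_at. apply Nat.eqb_neq in h. now rewrite h. Qed.

Lemma map_at_ext a i f g : f (a i) = g (a i) -> map_at a i f = map_at a i g.
Proof.
  intros h. apply functional_extensionality; intros l. unfold map_at.
  destruct (Nat.eqb_spec l i) as [->|]; auto.
Qed.

Lemma map_at_twice a i f g : map_at (map_at a i f) i g = map_at a i (fun n => g (f n)).
Proof.
  apply functional_extensionality; intros l. unfold map_at.
  destruct (Nat.eqb_spec l i); auto.
Qed.

Lemma map_at_comm a i j f g : i <> j -> map_at (map_at a i f) j g = map_at (map_at a j g) i f.
Proof.
  intros hij. apply functional_extensionality; intros l. unfold map_at.
  destruct (Nat.eqb_spec l i), (Nat.eqb_spec l j); subst; auto; contradiction.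
Qed.

Lemma map_at_id a i : map_at a i (fun n => n) = a.
Proof. apply functional_extensionality; intros l. unfold map_at. now destruct Nat.eqb. Qed.

Lemma prod_upto_S0 g n : prod_upto g (S n) = g 0%nat * prod_upto (fun j => g (S j)) n.
Proof.
  induction n as [|n IH]; [simpl; ring|].
  change (prod_upto g (S (S n))) with (prod_upto g (S n) * g (S (S n))).
  rewrite IH. simpl. ring.
Qed.

Lemma deg_upto_S0 a n : deg_upto a (S n) = (a 0%nat + deg_upto (exp_tail a) n)%nat.
Proof.
  induction n as [|n IH]; [reflexivity|].
  change (deg_upto a (S (S n))) with (deg_upto a (S n) + a (S (S n)))%nat.
  rewrite IH. simpl. unfold exp_tail. lia.
Qed.

Lemma prod_upto_ext g h n : (forall j, (j <= n)%nat -> g j = h j) -> prod_upto g n = prod_upto h n.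
Proof.
  induction n as [|n IH]; intros H; simpl; [apply H; lia|].
  rewrite IH by (intros; apply H; lia). now rewrite (H (S n)) by lia.
Qed.

Lemma deg_upto_ext g h n : (forall j, (j <= n)%nat -> g j = h j) -> deg_upto g n = deg_upto h n.
Proof.
  induction n as [|n IH]; intros H; simpl; [apply H; lia|].
  rewrite IH by (intros; apply H; lia). now rewrite (H (S n)) by lia.
Qed.

Lemma monomial_scale d s w a :
  prod_upto (fun j => (s * w j) ^ a j) d = s ^ deg_upto a d * monomial d a w.
Proof.
  unfold monomial. induction d as [|d IH]; simpl; [apply Rpow_mult_distr|].
  rewrite IH, Rpow_mult_distr, pow_add. ring.
Qed.

Lemma deg_map_at a i f n : (i <= n)%nat ->
  (deg_upto (map_at a i f) n + a i = deg_upto a n + f (a i))%nat.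
Proof.
  induction n as [|n IH]; intros hi; simpl.
  - replace i with 0%nat by lia. rewrite map_at_same. lia.
  - destruct (Nat.eq_dec i (S n)) as [->|hne].
    + rewrite map_at_same, (deg_upto_ext (map_at a (S n) f) a n); [lia|].
      intros j hj. apply map_at_other. lia.
    + rewrite map_at_other by lia. specialize (IH ltac:(lia)). lia.
Qed.

(* Polar separation of variables: x = (cos th, sin th w) turns the moment of
   x^b on S^(d+1) into a Wallis integral times a moment on S^d. *)
Lemma moment_S d b :
  moment (S d) b = wallis (b 0%nat) (deg_upto (exp_tail b) d + d) * moment d (exp_tail b).
Proof.
  unfold moment at 1. simpl.
  replace (fun th => sin th ^ d * sphere_int d
             (fun w => monomial (S d) b (cons_vec (cos th) (fun i => sin th * w i))))
    with (fun th => moment d (exp_tail b) * (cos th ^ b 0%nat * sin th ^ (deg_upto (exp_tail b) d + d))).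
  { rewrite Rint_scal. unfold wallis. ring. }
  apply functional_extensionality; intros th.
  replace (fun w => monomial (S d) b (cons_vec (cos th) (fun i => sin th * w i)))
    with (fun w => (cos th ^ b 0%nat * sin th ^ deg_upto (exp_tail b) d) * monomial d (exp_tail b) w).
  { rewrite sphere_int_scal, pow_add. unfold moment. ring. }
  apply functional_extensionality; intros w. unfold monomial at 2.
  rewrite prod_upto_S0. simpl cons_vec. rewrite monomial_scale. unfold exp_tail. ring.
Qed.

Lemma exp_tail_map_at_S a i f : exp_tail (map_at a (S i) f) = map_at (exp_tail a) i f.
Proof. reflexivity. Qed.

(* A moment with an odd exponent vanishes (antipodal symmetry in x_i). *)
Lemma moment_odd d : forall b i n, (i <= d)%nat -> b i = S (2 * n) -> moment d b = 0.
Proof.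
  induction d as [|d IH]; intros b i n hi hb.
  - replace i with 0%nat in hb by lia.
    unfold moment, monomial. simpl. rewrite hb, pow1, pow_1_odd. ring.
  - rewrite moment_S. destruct i as [|i].
    + rewrite hb, wallis_odd_cos. ring.
    + rewrite (IH (exp_tail b) i n) by (auto; lia). ring.
Qed.

Lemma moment_even_step d : forall c i, (i <= d)%nat ->
  (INR (deg_upto c d) + INR d + 1) * moment d (map_at c i (fun n => S (S n)))
  = (INR (c i) + 1) * moment d c.
Proof.
  induction d as [|d IH]; intros c i hi.
  - replace i with 0%nat by lia. unfold moment, monomial, map_at. simpl. ring.
  - rewrite !moment_S, deg_upto_S0, !S_INR, !plus_INR. destruct i as [|i].
    + rewrite map_at_same. replace (S (S (c 0%nat))) with (c 0%nat + 2)%nat by lia.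
      pose proof (wallis_cos_step (c 0%nat) (deg_upto (exp_tail c) d + d)) as H.
      rewrite plus_INR in H. change (exp_tail (map_at c 0 _)) with (exp_tail c).
      transitivity (wallis (c 0%nat + 2) (deg_upto (exp_tail c) d + d)
         * (INR (c 0%nat) + (INR (deg_upto (exp_tail c) d) + INR d) + 2) * moment d (exp_tail c));
        [ring | rewrite H; ring].
    + rewrite exp_tail_map_at_S. change (map_at c (S i) _ 0%nat) with (c 0%nat).
      change (c (S i)) with (exp_tail c i).
      assert (Hdeg := deg_map_at (exp_tail c) i (fun n => S (S n)) d ltac:(lia)); cbv beta in Hdeg.
      replace (deg_upto (map_at (exp_tail c) i (fun n => S (S n))) d + d)%nat
        with (deg_upto (exp_tail c) d + d + 2)%nat by lia.
      pose proof (wallis_sin_step (c 0%nat) (deg_upto (exp_tail c) d + d)) as H.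
      pose proof (IH (exp_tail c) i ltac:(lia)) as IHi. rewrite !plus_INR in H.
      set (Wc := wallis (c 0%nat) (deg_upto (exp_tail c) d + d)) in *.
      transitivity (wallis (c 0%nat) (deg_upto (exp_tail c) d + d + 2)
         * (INR (c 0%nat) + (INR (deg_upto (exp_tail c) d) + INR d) + 2)
         * moment d (map_at (exp_tail c) i (fun n => S (S n)))); [ring|].
      rewrite H. transitivity (Wc * ((INR (deg_upto (exp_tail c) d) + INR d + 1)
         * moment d (map_at (exp_tail c) i (fun n => S (S n))))); [ring|].
      rewrite IHi. ring.
Qed.

Definition dec2 (b : nat -> nat) (j : nat) : nat -> nat := map_at b j (fun n => n - 2)%nat.

(* The even-step recursion read downwards,
   b_j (|b| - 1 + d) M(b) = b_j (b_j - 1) M(b - 2 e_j); the factor b_j makes it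
   hold for every exponent (b_j = 1 is the odd case). *)
Lemma moment_dec2 d b j : (j <= d)%nat ->
  INR (b j) * (INR (deg_upto b d) - 1 + INR d) * moment d b
  = INR (b j) * INR (b j - 1) * moment d (dec2 b j).
Proof.
  intros hj. destruct (b j) as [|[|c]] eqn:E.
  - simpl. ring.
  - rewrite (moment_odd d b j 0) by auto. simpl. ring.
  - assert (Hdeg := deg_map_at b j (fun n => n - 2)%nat d hj). fold (dec2 b j) in Hdeg.
    rewrite E in Hdeg. cbv beta in Hdeg.
    assert (Hb : map_at (dec2 b j) j (fun n => S (S n)) = b).
    { unfold dec2. rewrite map_at_twice, (map_at_ext _ _ _ (fun n => n)), map_at_id; auto.
      rewrite E. lia. }
    pose proof (moment_even_step d (dec2 b j) j hj) as H.
    rewrite Hb in H. unfold dec2 in H at 2. rewrite map_at_same, E in H.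
    replace (deg_upto b d) with (deg_upto (dec2 b j) d + 2)%nat by lia.
    replace (S (S c) - 1)%nat with (S c) by lia.
    replace (S (S c) - 2)%nat with c in H by lia.
    rewrite plus_INR. replace (INR 2) with 2 by (simpl; ring). rewrite !S_INR.
    transitivity ((INR c + 1 + 1) * ((INR (deg_upto (dec2 b j) d) + INR d + 1) * moment d b));
      [ring | rewrite H; ring].
Qed.

Lemma moment_raise d b i : (i <= d)%nat ->
  (INR (deg_upto b d) + INR d) * moment d (map_at b i S) = INR (b i) * moment d (map_at b i pred).
Proof.
  intros hi. destruct (b i) as [|c] eqn:E.
  - rewrite (moment_odd d _ i 0); [simpl; ring | auto | now rewrite map_at_same, E].
  - pose proof (moment_dec2 d (map_at b i S) i hi) as H.
    assert (Hdeg := deg_map_at b i S d hi).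
    unfold dec2 in H. rewrite map_at_twice, map_at_same, E in H.
    rewrite (map_at_ext b i (fun n => S n - 2)%nat pred) in H by (rewrite E; simpl; lia).
    replace (deg_upto (map_at b i S) d) with (deg_upto b d + 1)%nat in H by lia.
    replace (S (S c) - 1)%nat with (S c) in H by lia.
    rewrite plus_INR in H. simpl (INR 1) in H.
    apply (Rmult_eq_reg_l (INR (S (S c)))); [|apply not_0_INR; lia].
    transitivity (INR (S (S c)) * (INR (deg_upto b d) + 1 - 1 + INR d) * moment d (map_at b i S));
      [ring | rewrite H; ring].
Qed.

Lemma moment_euler d b : INR (deg_upto b d) * (INR (deg_upto b d) - 1 + INR d) * moment d b =
  lsum (fun j => INR (b j) * INR (b j - 1) * moment d (dec2 b j)) (seq 0 (S d)).
Proof.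
  rewrite (lsum_ext _ (fun j => ((INR (deg_upto b d) - 1 + INR d) * moment d b) * INR (b j))).
  - rewrite lsum_scal, <- deg_lsum. ring.
  - intros j hj. apply in_seq in hj. rewrite <- moment_dec2 by lia. ring.
Qed.

(* Effect of the extra factor x_i on the j-th term of the Laplacian:
   d_j^2 (x_i x^a) = x_i d_j^2 x^a + 2 [j = i] d_i x^a, in moment form. *)
Lemma laplacian_term_raise d a i j :
  INR (map_at a i S j) * INR (map_at a i S j - 1) * moment d (dec2 (map_at a i S) j)
  = INR (a j) * INR (a j - 1) * moment d (map_at (dec2 a j) i S)
    + (if Nat.eqb j i then 2 * INR (a i) * moment d (map_at a i pred) else 0).
Proof.
  destruct (Nat.eqb_spec j i) as [->|hne].
  - unfold dec2. rewrite map_at_same, !map_at_twice.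
    rewrite (map_at_ext a i (fun n => S n - 2)%nat pred) by (simpl; lia).
    destruct (Compare_dec.le_lt_dec 2 (a i)) as [h2|h2].
    + rewrite (map_at_ext a i (fun n => S (n - 2)) pred) by lia.
      replace (S (a i) - 1)%nat with (a i) by lia.
      rewrite S_INR, minus_INR by lia. simpl. ring.
    + destruct (a i) as [|[|c]]; [| |lia]; simpl; ring.
  - unfold dec2. rewrite map_at_other, map_at_comm by auto. ring.
Qed.

(* Moment form of  \int x_i Delta(x^a) = (|a| + d) (|a| - 1) \int x_i x^a. *)
Lemma moment_coord_laplacian d a i : (i <= d)%nat ->
  (INR (deg_upto a d) + INR d) * (INR (deg_upto a d) - 1) * moment d (map_at a i S)
  = lsum (fun j => INR (a j) * INR (a j - 1) * moment d (map_at (dec2 a j) i S)) (seq 0 (S d)).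
Proof.
  intros hi.
  assert (Heuler := moment_euler d (map_at a i S)).
  rewrite (lsum_ext _ _ _ (fun j _ => laplacian_term_raise d a i j)), lsum_plus,
          lsum_delta in Heuler by exact hi.
  assert (Hdeg := deg_map_at a i S d hi).
  replace (deg_upto (map_at a i S) d) with (deg_upto a d + 1)%nat in Heuler by lia.
  rewrite plus_INR in Heuler. simpl (INR 1) in Heuler.
  pose proof (moment_raise d a i hi) as Hraise.
  lra.
Qed.

(* The cube [-1, 1]^(d+1), which contains S^d and all its polar slices. *)
Definition in_cube (d : nat) (v : nat -> R) : Prop := forall i, (i <= d)%nat -> Rabs (v i) <= 1.

(* Integrands for which [sphere_int] behaves like an integral: bounded and
   uniformly continuous on the cube (for the sup-distance on coordinates 0..d). *)
Record regular (d : nat) (G : (nat -> R) -> R) : Prop := {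
  regular_bounded : exists B, forall v, in_cube d v -> Rabs (G v) <= B;
  regular_unif : forall eps, 0 < eps -> exists del, 0 < del /\
    forall v v', in_cube d v -> in_cube d v' ->
      (forall i, (i <= d)%nat -> Rabs (v i - v' i) <= del) -> Rabs (G v - G v') <= eps }.

Definition polar_slice (G : (nat -> R) -> R) (th : R) (w : nat -> R) : R :=
  G (cons_vec (cos th) (fun i => sin th * w i)).

Lemma Rabs_le_1_mult x y : Rabs x <= 1 -> Rabs (x * y) <= Rabs y.
Proof.
  intros hx. rewrite Rabs_mult. pose proof (Rabs_pos x). pose proof (Rabs_pos y). nra.
Qed.

Lemma Rabs_pow_le_1 x n : Rabs x <= 1 -> Rabs (x ^ n) <= 1.
Proof.
  intros hx. induction n as [|n IH]; simpl; [rewrite Rabs_R1; lra|].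
  eapply Rle_trans; [apply Rabs_le_1_mult, hx | exact IH].
Qed.

Lemma Rabs_sin_le_1 x : Rabs (sin x) <= 1.
Proof. apply Rabs_le, SIN_bound. Qed.

Lemma in_cube_polar d th w : in_cube d w -> in_cube (S d) (cons_vec (cos th) (fun i => sin th * w i)).
Proof.
  intros h [|i] hi; simpl.
  - apply Rabs_le, COS_bound.
  - eapply Rle_trans; [apply Rabs_le_1_mult, Rabs_sin_le_1 | apply h; lia].
Qed.

Lemma regular_slice d G th : regular (S d) G -> regular d (polar_slice G th).
Proof.
  intros [[B hB] hU]. split.
  - exists B. intros v hv. now apply hB, in_cube_polar.
  - intros eps he. destruct (hU eps he) as [del [hd H]]. exists del. split; auto.
    intros v v' hv hv' hc. apply H; try now apply in_cube_polar.
    intros [|i] hi; simpl.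
    + rewrite Rminus_eq_0, Rabs_R0; lra.
    + rewrite <- Rmult_minus_distr_l.
      eapply Rle_trans; [apply Rabs_le_1_mult, Rabs_sin_le_1 | apply hc; lia].
Qed.

Lemma regular_const d c : regular d (fun _ => c).
Proof.
  split; [exists (Rabs c); intros; lra|].
  intros eps he. exists 1. split; [lra|]. intros. rewrite Rminus_eq_0, Rabs_R0; lra.
Qed.

Lemma regular_coord d i : (i <= d)%nat -> regular d (fun v => v i).
Proof.
  intros hi. split; [exists 1; intros v hv; now apply hv|].
  intros eps he. exists eps. split; [lra|]. intros v v' _ _ hc. now apply hc.
Qed.

Lemma regular_plus d G H : regular d G -> regular d H -> regular d (fun v => G v + H v).
Proof.
  intros [[B1 hB1] hU1] [[B2 hB2] hU2]. split.
  - exists (B1 + B2). intros v hv. eapply Rle_trans; [apply Rabs_triang|].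
    pose proof (hB1 v hv); pose proof (hB2 v hv); lra.
  - intros eps he. destruct (hU1 (eps/2) ltac:(lra)) as [d1 [h1 HU1]].
    destruct (hU2 (eps/2) ltac:(lra)) as [d2 [h2 HU2]].
    exists (Rmin d1 d2). split; [now apply Rmin_pos|].
    intros v v' hv hv' hc.
    replace (G v + H v - (G v' + H v')) with ((G v - G v') + (H v - H v')) by ring.
    eapply Rle_trans; [apply Rabs_triang|].
    assert (Rabs (G v - G v') <= eps/2).
    { apply HU1; auto. intros i hi. eapply Rle_trans; [apply hc; auto | apply Rmin_l]. }
    assert (Rabs (H v - H v') <= eps/2).
    { apply HU2; auto. intros i hi. eapply Rle_trans; [apply hc; auto | apply Rmin_r]. }
    lra.
Qed.

Lemma regular_pos_bound d G : regular d G -> exists C, 0 < C /\ forall v, in_cube d v -> Rabs (G v) <= C.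
Proof.
  intros [[B hB] _]. exists (Rabs B + 1). split; [pose proof (Rabs_pos B); lra|].
  intros v hv. pose proof (hB v hv). pose proof (Rle_abs B). lra.
Qed.

Lemma regular_mult d G H : regular d G -> regular d H -> regular d (fun v => G v * H v).
Proof.
  intros hG hH.
  destruct (regular_pos_bound d G hG) as [C1 [hC1 hB1]].
  destruct (regular_pos_bound d H hH) as [C2 [hC2 hB2]].
  split.
  - exists (C1 * C2). intros v hv. rewrite Rabs_mult.
    apply Rmult_le_compat; auto using Rabs_pos.
  - intros eps he.
    destruct (regular_unif d G hG (eps/(2*C2))) as [d1 [h1 HU1]]; [apply Rdiv_lt_0_compat; lra|].
    destruct (regular_unif d H hH (eps/(2*C1))) as [d2 [h2 HU2]]; [apply Rdiv_lt_0_compat; lra|].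
    exists (Rmin d1 d2). split; [now apply Rmin_pos|].
    intros v v' hv hv' hc.
    replace (G v * H v - G v' * H v') with ((G v - G v') * H v + G v' * (H v - H v')) by ring.
    eapply Rle_trans; [apply Rabs_triang|]. rewrite !Rabs_mult.
    assert (E1 : Rabs (G v - G v') * Rabs (H v) <= eps/(2*C2) * C2).
    { apply Rmult_le_compat; auto using Rabs_pos. apply HU1; auto.
      intros i hi. eapply Rle_trans; [apply hc; auto | apply Rmin_l]. }
    assert (E2 : Rabs (G v') * Rabs (H v - H v') <= C1 * (eps/(2*C1))).
    { apply Rmult_le_compat; auto using Rabs_pos. apply HU2; auto.
      intros i hi. eapply Rle_trans; [apply hc; auto | apply Rmin_r]. }
    replace (eps / (2 * C2) * C2) with (eps/2) in E1 by (field; lra).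
    replace (C1 * (eps / (2 * C1))) with (eps/2) in E2 by (field; lra).
    lra.
Qed.

Lemma regular_scal d c G : regular d G -> regular d (fun v => c * G v).
Proof. intros; apply regular_mult; auto using regular_const. Qed.

Lemma regular_antipode d G : regular d G -> regular d (fun v => G (fun i => - v i)).
Proof.
  intros [[B hB] hU]. split.
  - exists B. intros v hv. apply hB. intros i hi. rewrite Rabs_Ropp. auto.
  - intros eps he. destruct (hU eps he) as [del [hd H]]. exists del; split; auto.
    intros v v' hv hv' hc. apply H; try (intros i hi; rewrite Rabs_Ropp; auto).
    intros i hi. replace (- v i - - v' i) with (- (v i - v' i)) by ring.
    rewrite Rabs_Ropp; auto.
Qed.

(* Post-composition with a continuous function: by Heine, it is uniformly
   continuous on the compact range [-B, B] of G. *)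
Lemma regular_comp d (f : R -> R) G : (forall x, continuous f x) -> regular d G -> regular d (fun v => f (G v)).
Proof.
  intros hf hG. destruct (regular_pos_bound d G hG) as [B [hB0 hB]].
  assert (hrange : forall v, in_cube d v -> -B <= G v <= B).
  { intros v hv. apply Rabs_le_between, hB, hv. }
  assert (hfpt : forall x, continuity_pt f x) by (intros; apply continuity_pt_filterlim, hf).
  split.
  - destruct (continuity_ab_maj (fun c => Rabs (f c)) (-B) B ltac:(lra)) as [Mx [HM _]].
    { intros c _. apply (continuity_pt_comp f Rabs); [apply hfpt | apply Rcontinuity_abs]. }
    exists (Rabs (f Mx)). intros v hv. apply HM, hrange, hv.
  - intros eps he.
    destruct (Heine f (fun c => -B <= c <= B) (compact_P3 _ _) (fun x _ => hfpt x)
                (mkposreal eps he)) as [del hdel].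
    destruct (regular_unif d G hG (del/2)) as [d1 [h1 H1]]; [pose proof (cond_pos del); lra|].
    exists d1. split; auto. intros v v' hv hv' hc.
    left. apply hdel; auto. pose proof (H1 v v' hv hv' hc). pose proof (cond_pos del). lra.
Qed.

Lemma regular_pow d G n : regular d G -> regular d (fun v => G v ^ n).
Proof. intros h. induction n; simpl; auto using regular_const, regular_mult. Qed.

Lemma regular_monomial d a : regular d (monomial d a).
Proof.
  unfold monomial. assert (H : forall n, (n <= d)%nat -> regular d (fun v => prod_upto (fun i => v i ^ a i) n)).
  { induction n; intros hn; simpl.
    - apply regular_pow, regular_coord; lia.
    - apply regular_mult; [apply IHn; lia | apply regular_pow, regular_coord; lia]. }
  apply H; lia.
Qed.

Lemma regular_peval d p : regular d (peval d p).
Proof.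
  induction p as [|m p IH]; [exact (regular_const d 0)|].
  apply (regular_plus d (mono_eval d m) (peval d p)); [|exact IH].
  apply regular_scal, regular_monomial.
Qed.

Lemma regular_partial_dot d u n : (n <= d)%nat -> regular d (fun v => sum_f_R0 (fun i => u i * v i) n).
Proof.
  induction n; intros hn; simpl.
  - apply regular_scal, regular_coord; lia.
  - apply regular_plus; [apply IHn; lia | apply regular_scal, regular_coord; lia].
Qed.

Lemma continuous_eps_delta (f : R -> R) x : continuous f x <->
  forall eps, 0 < eps -> exists del, 0 < del /\ forall y, Rabs (y - x) < del -> Rabs (f y - f x) < eps.
Proof.
  split.
  - intros H eps he. destruct (proj1 (filterlim_locally f (f x)) H (mkposreal eps he)) as [del hd].
    exists del. split; [apply cond_pos | intros y hy; exact (hd y hy)].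
  - intros H. apply filterlim_locally. intros eps. destruct (H eps (cond_pos eps)) as [del [hd hy]].
    exists (mkposreal del hd). intros y hb. exact (hy y hb).
Qed.

Record sphere_int_props (d : nat) : Prop := {
  sphere_int_add : forall G H, regular d G -> regular d H ->
    sphere_int d (fun v => G v + H v) = sphere_int d G + sphere_int d H;
  sphere_int_bound : forall G e, regular d G -> (forall v, in_cube d v -> Rabs (G v) <= e) ->
    Rabs (sphere_int d G) <= 2 * PI ^ d * e;
  sphere_int_antipode : forall G, regular d G ->
    sphere_int d (fun v => G (fun i => - v i)) = sphere_int d G }.

Lemma sphere_int_props_0 : sphere_int_props 0.
Proof.
  assert (Hpts : forall G e, (forall v, in_cube 0 v -> Rabs (G v) <= e) ->
            Rabs (G (cons_vec 1 (fun _ => 0))) <= e /\ Rabs (G (cons_vec (-1) (fun _ => 0))) <= e).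
  { intros G e hb. split; apply hb; intros i hi; replace i with 0%nat by lia; simpl;
      [rewrite Rabs_R1 | rewrite Rabs_left]; lra. }
  split.
  - intros G H _ _. simpl. ring.
  - intros G e _ hb. simpl. destruct (Hpts G e hb).
    eapply Rle_trans; [apply Rabs_triang | lra].
  - intros G _. simpl.
    replace (fun i => - cons_vec 1 (fun _ => 0) i) with (cons_vec (-1) (fun _ => 0))
      by (apply functional_extensionality; intros [|i]; simpl; ring).
    replace (fun i => - cons_vec (-1) (fun _ => 0) i) with (cons_vec 1 (fun _ => 0))
      by (apply functional_extensionality; intros [|i]; simpl; ring).
    ring.
Qed.

Section PolarStep.

Variable d : nat.
Hypothesis IH : sphere_int_props d.

(* The polar slices of a regular integrand depend continuously on the angle:
   they are uniformly close when cos and sin are close, and [sphere_int d] is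
   bounded by the sup norm. *)
Lemma slice_integral_cont G : regular (S d) G ->
  forall x, continuous (fun th => sphere_int d (polar_slice G th)) x.
Proof.
  intros hG x. apply continuous_eps_delta. intros eps he.
  set (e' := eps / (2 * (2 * PI ^ d))).
  assert (hM : 0 < 2 * PI ^ d) by (pose proof (pow_lt PI d PI_RGT_0); lra).
  assert (he' : 0 < e') by (apply Rdiv_lt_0_compat; lra).
  destruct (regular_unif _ G hG e' he') as [del [hdel HU]].
  destruct (proj1 (continuous_eps_delta cos x) (continuous_cos x) del hdel) as [d1 [h1 H1]].
  destruct (proj1 (continuous_eps_delta sin x) (continuous_sin x) del hdel) as [d2 [h2 H2]].
  exists (Rmin d1 d2). split; [now apply Rmin_pos|]. intros y hy.
  specialize (H1 y (Rlt_le_trans _ _ _ hy (Rmin_l _ _))).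
  specialize (H2 y (Rlt_le_trans _ _ _ hy (Rmin_r _ _))).
  replace (sphere_int d (polar_slice G y) - sphere_int d (polar_slice G x))
    with (sphere_int d (fun w => polar_slice G y w + (-1) * polar_slice G x w))
    by (rewrite sphere_int_add, sphere_int_scal; auto using regular_slice, regular_scal; ring).
  eapply Rle_lt_trans.
  - apply (sphere_int_bound _ IH _ e'); [auto using regular_plus, regular_slice, regular_scal|].
    intros w hw. unfold polar_slice.
    match goal with |- Rabs (?a + -1 * ?b) <= _ => replace (a + -1 * b) with (a - b) by ring end.
    apply HU; try now apply in_cube_polar.
    intros [|i] hi; simpl; [lra|].
    rewrite <- Rmult_minus_distr_r, Rmult_comm.
    eapply Rle_trans; [apply Rabs_le_1_mult, hw; lia | lra].
  - unfold e'. replace (2 * PI ^ d * (eps / (2 * (2 * PI ^ d)))) with (eps/2) by (field; lra). lra.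
Qed.

Lemma polar_integrand_cont G : regular (S d) G ->
  forall x, continuous (fun th => sin th ^ d * sphere_int d (polar_slice G th)) x.
Proof.
  intros hG x. apply cont_mult; [apply cont_pow, continuous_sin | now apply slice_integral_cont].
Qed.

Lemma sphere_int_S_RInt G : regular (S d) G ->
  sphere_int (S d) G = RInt (fun th => sin th ^ d * sphere_int d (polar_slice G th)) 0 PI.
Proof. intros hG. exact (Rint_cont _ (polar_integrand_cont G hG)). Qed.

Lemma sphere_int_add_S G H : regular (S d) G -> regular (S d) H ->
  sphere_int (S d) (fun v => G v + H v) = sphere_int (S d) G + sphere_int (S d) H.
Proof.
  intros hG hH. rewrite !sphere_int_S_RInt by auto using regular_plus.
  rewrite <- RInt_plusR by (apply ex_RInt_cont, polar_integrand_cont; auto).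
  apply RInt_extR. intros th.
  change (polar_slice (fun v => G v + H v) th) with (fun w => polar_slice G th w + polar_slice H th w).
  rewrite sphere_int_add by auto using regular_slice. ring.
Qed.

Lemma sphere_int_bound_S G e : regular (S d) G -> (forall v, in_cube (S d) v -> Rabs (G v) <= e) ->
  Rabs (sphere_int (S d) G) <= 2 * PI ^ S d * e.
Proof.
  intros hG hb. rewrite sphere_int_S_RInt by auto.
  eapply Rle_trans.
  - apply (abs_RInt_le_const _ 0 PI (2 * PI ^ d * e)); [apply PI_ge0 | apply ex_RInt_cont, polar_integrand_cont; auto|].
    intros t _. eapply Rle_trans; [apply Rabs_le_1_mult|].
    + apply Rabs_pow_le_1, Rabs_sin_le_1.
    + apply (sphere_int_bound _ IH); [now apply regular_slice|].
      intros w hw. now apply hb, in_cube_polar.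
  - simpl. right. ring.
Qed.

Lemma antipode_polar th w : (fun i => - cons_vec (cos th) (fun j => sin th * w j) i) =
  cons_vec (cos (PI - th)) (fun j => sin (PI - th) * (- w j)).
Proof.
  apply functional_extensionality. intros [|i]; simpl.
  - rewrite cos_minus, cos_PI, sin_PI. ring.
  - rewrite sin_PI_x. ring.
Qed.

(* The antipodal map is the reflection th |-> PI - th combined with the
   antipodal map of S^d on each slice. *)
Lemma sphere_int_antipode_S G : regular (S d) G ->
  sphere_int (S d) (fun v => G (fun i => - v i)) = sphere_int (S d) G.
Proof.
  intros hG. rewrite !sphere_int_S_RInt by auto using regular_antipode.
  rewrite <- (RInt_reflect (fun th => sin th ^ d * sphere_int d (polar_slice G th)))
    by exact (polar_integrand_cont G hG).
  apply RInt_extR. intros th. rewrite sin_PI_x. f_equal.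
  rewrite <- (sphere_int_antipode _ IH (polar_slice G (PI - th))) by now apply regular_slice.
  unfold polar_slice. f_equal. apply functional_extensionality; intros w.
  now rewrite antipode_polar.
Qed.

End PolarStep.

Lemma sphere_int_props_all d : sphere_int_props d.
Proof.
  induction d as [|d IH]; [exact sphere_int_props_0|].
  split; auto using sphere_int_add_S, sphere_int_bound_S, sphere_int_antipode_S.
Qed.

Lemma sphere_int_plus d G H : regular d G -> regular d H ->
  sphere_int d (fun v => G v + H v) = sphere_int d G + sphere_int d H.
Proof. apply sphere_int_add, sphere_int_props_all. Qed.

Lemma sphere_int_odd d G : regular d G -> (forall v, G (fun i => - v i) = - G v) -> sphere_int d G = 0.
Proof.
  intros hG hodd.
  assert (H := sphere_int_antipode _ (sphere_int_props_all d) G hG).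
  replace (fun v => G (fun i => - v i)) with (fun v => -1 * G v) in H
    by (apply functional_extensionality; intros v; rewrite hodd; ring).
  rewrite sphere_int_scal in H. lra.
Qed.

(* acos is continuous on all of R (it is constant outside [-1, 1]).  For x > 0
   it agrees near x with atan (sqrt (1 - y^2) / y); the case x < 0 follows by
   acos (- y) = PI - acos y. *)
Lemma acos_cont_pos x : 0 < x -> continuous acos x.
Proof.
  intros hx.
  apply (continuous_ext_loc (T:=R_UniformSpace) (U:=R_UniformSpace) acos
     (fun y => atan (sqrt (1 - y * y) * / y))).
  - exists (mkposreal x hx). intros y hy. unfold ball in hy; simpl in hy.
    unfold AbsRing_ball, abs, minus, plus, opp in hy; simpl in hy.
    apply Rabs_lt_between in hy. rewrite acos_atan by lra. reflexivity.
  - apply (continuous_comp (fun y => sqrt (1 - y * y) * / y) atan).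
    + apply cont_mult; [apply continuous_sqrt_comp | apply continuous_Rinv; lra].
      apply (cont_plus (fun _ => 1) (fun y => - (y * y))); [apply cont_const|].
      apply cont_opp, cont_mult; apply cont_id.
    + apply cont_of_pt, derivable_continuous_pt, derivable_pt_atan.
Qed.

Lemma acos_cont x : continuous acos x.
Proof.
  destruct (Rtotal_order x 0) as [h|[->|h]].
  - apply (continuous_ext (T:=R_UniformSpace) (U:=R_UniformSpace) (fun y => PI - acos (- y))).
    { intros y. change (PI - acos (- y) = acos y). rewrite acos_opp. ring. }
    apply (cont_plus (fun _ => PI) (fun y => - acos (- y))); [apply cont_const|].
    apply cont_opp, (continuous_comp (fun y : R => - y) acos); [apply cont_opp, cont_id|].
    apply acos_cont_pos. lra.
  - apply cont_of_pt, derivable_continuous_pt, derivable_pt_acos. lra.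
  - now apply acos_cont_pos.
Qed.

(* K^infty(t) = t/4 + t asin(t) / (2 PI): its part beyond the linear term t/4
   is an even continuous function. *)
Definition Kinf_even (t : R) : R := Kinf t - / 4 * t.

Lemma Kinf_even_cont x : continuous Kinf_even x.
Proof.
  unfold Kinf_even, Kinf. apply (cont_plus _ (fun t => - (/ 4 * t))).
  - apply cont_mult; [apply cont_mult; [apply cont_const | apply cont_id]|].
    apply (cont_plus (fun _ => PI) (fun y => - acos y)); [apply cont_const | apply cont_opp, acos_cont].
  - apply cont_opp, cont_mult; [apply cont_const | apply cont_id].
Qed.

Lemma Kinf_even_opp t : Kinf_even (- t) = Kinf_even t.
Proof. unfold Kinf_even, Kinf. rewrite acos_opp. pose proof PI_RGT_0. field. lra. Qed.

Lemma peval_odd d k p : homogeneous d k p -> Nat.odd k = true ->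
  forall v, peval d p (fun i => - v i) = - peval d p v.
Proof.
  intros hh ho v. apply Nat.odd_spec in ho. destruct ho as [n ->].
  induction p as [|m p IH]; [simpl; ring|].
  inversion hh as [|m' p' hm hp]; subst. simpl. rewrite IH by auto. unfold mono_eval.
  rewrite (prod_upto_ext _ (fun i => (-1 * v i) ^ snd m i)) by (intros; f_equal; ring).
  rewrite monomial_scale, hm. replace (2 * n + 1)%nat with (S (2 * n)) by lia.
  rewrite pow_1_odd. unfold monomial. ring.
Qed.

Lemma dot_antipode d u v : dot d u (fun i => - v i) = - dot d u v.
Proof. unfold dot. induction d as [|d IH]; simpl; [|rewrite IH]; ring. Qed.

Lemma monomial_coord d v a i : (i <= d)%nat ->
  v i * monomial d a v = monomial d (map_at a i S) v.
Proof.
  unfold monomial. induction d as [|d IH]; intros hi; simpl.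
  - replace i with 0%nat by lia. now rewrite map_at_same.
  - destruct (Nat.eq_dec i (S d)) as [->|hne].
    + rewrite map_at_same, (prod_upto_ext (fun j => v j ^ map_at a (S d) S j) (fun j => v j ^ a j)).
      * simpl. ring.
      * intros j hj. rewrite map_at_other by lia. reflexivity.
    + rewrite <- IH by lia. rewrite map_at_other by lia. ring.
Qed.

Lemma sphere_int_coord_peval d i q : (i <= d)%nat ->
  sphere_int d (fun v => v i * peval d q v) = lsum (fun m => fst m * moment d (map_at (snd m) i S)) q.
Proof.
  intros hi. induction q as [|m q IH].
  - replace (fun v => v i * peval d nil v) with (fun _ : nat -> R => 0)
      by (apply functional_extensionality; intros; simpl; ring).
    apply sphere_int_zero.
  - rewrite lsum_cons, <- IH.
    replace (fun v => v i * peval d (m :: q) v)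
      with (fun v => fst m * monomial d (map_at (snd m) i S) v + v i * peval d q v).
    + rewrite sphere_int_plus, sphere_int_scal; auto using regular_scal, regular_monomial.
      apply regular_mult; auto using regular_coord, regular_peval.
    + apply functional_extensionality; intros v. simpl. unfold mono_eval.
      rewrite <- monomial_coord by auto. unfold monomial. ring.
Qed.

(* A harmonic homogeneous polynomial of degree k >= 2 is orthogonal on S^d to
   every coordinate function:  (k + d)(k - 1) \int x_i p = \int x_i Delta p = 0. *)
Lemma harmonic_orth_coord d k p i : (2 <= k)%nat -> homogeneous d k p -> harmonic d p ->
  (i <= d)%nat -> sphere_int d (fun v => v i * peval d p v) = 0.
Proof.
  intros hk hhom hharm hi.
  assert (Hlap : sphere_int d (fun v => v i * peval d (laplacian d p) v) = 0).
  { replace (fun v => v i * peval d (laplacian d p) v) with (fun _ : nat -> R => 0)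
      by (apply functional_extensionality; intros v; rewrite hharm; ring).
    apply sphere_int_zero. }
  rewrite sphere_int_coord_peval in Hlap |- * by exact hi.
  unfold laplacian in Hlap. rewrite lsum_flat_map in Hlap.
  rewrite (lsum_ext _ (fun j => lsum (fun m => fst m * (INR (snd m j) * INR (snd m j - 1) *
             moment d (map_at (dec2 (snd m) j) i S))) p)) in Hlap
    by (intros j _; rewrite lsum_map; apply lsum_ext; intros [c a] _; unfold d2_mono, dec2, map_at; simpl; ring).
  rewrite lsum_swap in Hlap.
  rewrite (lsum_ext _ (fun m => (INR k + INR d) * (INR k - 1) * (fst m * moment d (map_at (snd m) i S))))
    in Hlap.
  - rewrite lsum_scal in Hlap.
    assert (0 < (INR k + INR d) * (INR k - 1)).
    { apply le_INR in hk. pose proof (pos_INR d). simpl in hk. nra. }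
    apply (Rmult_eq_reg_l ((INR k + INR d) * (INR k - 1))); lra.
  - intros m hm. rewrite lsum_scal.
    unfold homogeneous in hhom. rewrite Forall_forall in hhom.
    rewrite <- (hhom m hm), <- moment_coord_laplacian by exact hi. ring.
Qed.

Lemma harmonic_orth_linear d k p u : (2 <= k)%nat -> homogeneous d k p -> harmonic d p ->
  sphere_int d (fun v => dot d u v * peval d p v) = 0.
Proof.
  intros hk hhom hharm. unfold dot.
  assert (H : forall n, (n <= d)%nat ->
    sphere_int d (fun v => sum_f_R0 (fun i => u i * v i) n * peval d p v) = 0).
  { induction n as [|n IH]; intros hn; simpl.
    - replace (fun v : nat -> R => u 0%nat * v 0%nat * peval d p v)
        with (fun v => u 0%nat * (v 0%nat * peval d p v))
        by (apply functional_extensionality; intros; ring).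
      rewrite sphere_int_scal, (harmonic_orth_coord d k) by (auto; lia). ring.
    - replace (fun v => (sum_f_R0 (fun i => u i * v i) n + u (S n) * v (S n)) * peval d p v)
        with (fun v => sum_f_R0 (fun i => u i * v i) n * peval d p v + u (S n) * (v (S n) * peval d p v))
        by (apply functional_extensionality; intros; ring).
      rewrite sphere_int_plus.
      + rewrite IH, sphere_int_scal, (harmonic_orth_coord d k) by (auto; lia). ring.
      + apply regular_mult; [apply regular_partial_dot; lia | apply regular_peval].
      + apply regular_scal, regular_mult; [apply regular_coord; lia | apply regular_peval].
  }
  apply H. lia.
Qed.

Theorem theorem3 (d k : nat) (p : mpoly)
  (hd : (1 <= d)%nat) (hk : (3 <= k)%nat) (hodd : Nat.odd k = true)
  (hhom : homogeneous d k p) (hharm : harmonic d p)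
  (u : nat -> R) (hu : dot d u u = 1) :
  sphere_int d (fun v => Kinf (dot d u v) * peval d p v) = 0.
Proof.
  replace (fun v => Kinf (dot d u v) * peval d p v)
    with (fun v => / 4 * (dot d u v * peval d p v) + Kinf_even (dot d u v) * peval d p v)
    by (apply functional_extensionality; intros v; unfold Kinf_even; ring).
  assert (Hdot : regular d (fun v => dot d u v)) by (apply regular_partial_dot; lia).
  rewrite sphere_int_plus, sphere_int_scal.
  - (* Linear part: p is orthogonal to linear forms.  Even part: the integrand is odd. *)
    rewrite (harmonic_orth_linear d k) by (auto; lia).
    rewrite (sphere_int_odd d); [ring | |].
    + apply regular_mult; [apply regular_comp; auto using Kinf_even_cont | apply regular_peval].
    + intros v. rewrite dot_antipode, Kinf_even_opp, (peval_odd d k p hhom hodd). ring.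
  - apply regular_scal, regular_mult; auto using regular_peval.
  - apply regular_mult; [apply regular_comp; auto using Kinf_even_cont | apply regular_peval].
Qed.
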